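(* For $b>0$ define $f_b:[0,1]\to\mathbb{R}$ by $f_b(x)=\dfrac{(b+1)x}{b+\sqrt{1-x^2}}$. Then: (i) $b_1=\dfrac{2}{\pi-2}$ is the largest value of $b>0$ such that $\arcsin x\le f_b(x)$ for all $x\in[0,1]$; (ii) $b_2=2$ is the smallest value of $b>0$ such that $f_b(x)\le \arcsin x$ for all $x\in[0,1]$; (iii) for every $b\in(b_1,2)$ the function $h_b(x)=f_b(x)-\arcsin x$ has a root in the open interval $(0,1)$.
   Context: The functions $f_b$ are exactly the members of the family $\Phi_{a,b}(x)=\frac{ax}{b+\sqrt{1-x^2}}$ ($a,b>0$) satisfying $\Phi_{a,b}(0)=\arcsin 0$ and $\Phi_{a,b}'(0)=\arcsin'(0)$. *)

From Stdlib Require Export Reals.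
Open Scope R_scope.

Definition f_b (b x : R) : R := (b + 1) * x / (b + sqrt (1 - x ^ 2)).

Definition h_b (b x : R) : R := f_b b x - asin x.

Definition b1 : R := 2 / (PI - 2).

(** Put x = sin t with t in [0, PI/2]. Then h_b(x) has the sign of
    h_num b t = (b+1) sin t - t (b + cos t), which vanishes at t = 0 and equals
    (PI/2 - 1)(b1 - b) at t = PI/2. With t = 2u its derivative is
    4u sin u (cos u - (b/2) sin u / u), and for b <= 2 the bracket is nonincreasing;
    so the derivative changes sign at most once, from + to -, and h_num b stays above the
    smaller of its endpoint values. For b = b1 both are 0, which gives (i); testing x = 1
    gives maximality. The bound in (ii) is Cusa's inequality 3 sin t <= t (2 + cos t); it is
    optimal because for b < 2 Taylor expansion gives h_num b t ~ (2 - b) t^3 / 6 > 0 near 0.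
    For b1 < b < 2, h_num b is positive near 0 and negative at PI/2, and the intermediate
    value theorem gives (iii). *)

From Stdlib Require Import Reals Lra Psatz Classical.
From Coquelicot Require Import Coquelicot.
Open Scope R_scope.

Lemma Rle_of_derive_nonneg (f f' : R -> R) a c : a <= c ->
  (forall t, a <= t <= c -> is_derive f t (f' t)) ->
  (forall t, a <= t <= c -> 0 <= f' t) -> f a <= f c.
Proof.
  intros Hac Hd Hpos.
  destruct (Req_dec a c) as [<-|Hne]; [lra|].
  destruct (MVT_cor2 f f' a c) as [t [Hmvt Ht]]; [lra| |].
  - intros t Ht. apply is_derive_Reals, Hd. exact Ht.
  - assert (0 <= f' t) by (apply Hpos; lra). nra.
Qed.

Lemma Rge_of_derive_nonpos (f f' : R -> R) a c : a <= c ->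
  (forall t, a <= t <= c -> is_derive f t (f' t)) ->
  (forall t, a <= t <= c -> f' t <= 0) -> f c <= f a.
Proof.
  intros Hac Hd Hneg.
  enough (- f a <= - f c) by lra.
  apply (Rle_of_derive_nonneg (fun t => - f t) (fun t => - f' t)); [exact Hac| |].
  - intros t Ht. apply (is_derive_opp f), Hd. exact Ht.
  - intros t Ht. specialize (Hneg t Ht). lra.
Qed.

Lemma Rmin_ends_le_of_derive_sign_change (f f' : R -> R) a c x :
  (forall t, a <= t <= c -> is_derive f t (f' t)) ->
  (forall s t, a <= s <= t -> t <= c -> f' s < 0 -> f' t <= 0) ->
  a <= x <= c -> Rmin (f a) (f c) <= f x.
Proof.
  intros Hd Hsign Hx.
  destruct (classic (exists s, a <= s <= x /\ f' s < 0)) as [[s [Hs Hneg]]|Hnone].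
  - apply Rle_trans with (f c); [apply Rmin_r|].
    apply (Rge_of_derive_nonpos f f'); [lra| |].
    + intros t Ht. apply Hd. lra.
    + intros t Ht. apply (Hsign s); lra.
  - apply Rle_trans with (f a); [apply Rmin_l|].
    apply (Rle_of_derive_nonneg f f'); [lra| |].
    + intros t Ht. apply Hd. lra.
    + intros t Ht. apply Rnot_lt_le. intros Hlt. apply Hnone. exists t. split; [lra|exact Hlt].
Qed.

Ltac expand_taylor_sum :=
  cbn [sum_f_R0 Nat.mul Nat.add]; rewrite ?fact_simpl, ?mult_INR; simpl; field.

Lemma sin_bounds t : 0 <= t <= PI ->
  t - t^3/6 <= sin t <= t - t^3/6 + t^5/120.
Proof.
  intros Ht. pose proof PI_4.
  assert (Hlb : sin_lb t = t - t^3/6 + t^5/120 - t^7/5040)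
    by (unfold sin_lb, sin_approx, sin_term; expand_taylor_sum).
  assert (Hub : sin_ub t = t - t^3/6 + t^5/120 - t^7/5040 + t^9/362880)
    by (unfold sin_ub, sin_approx, sin_term; expand_taylor_sum).
  destruct (SIN t) as [Hl Hu]; try lra.
  assert (0 <= t^5 * (42 - t^2)) by (apply Rmult_le_pos; [apply pow_le|]; nra).
  assert (0 <= t^7 * (72 - t^2)) by (apply Rmult_le_pos; [apply pow_le|]; nra).
  split; nra.
Qed.

Lemma cos_bounds t : -(PI/2) <= t <= PI/2 ->
  1 - t^2/2 + t^4/24 - t^6/720 <= cos t <= 1 - t^2/2 + t^4/24.
Proof.
  intros Ht. pose proof PI_4.
  assert (Hlb : cos_lb t = 1 - t^2/2 + t^4/24 - t^6/720)
    by (unfold cos_lb, cos_approx, cos_term; expand_taylor_sum).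
  assert (Hub : cos_ub t = 1 - t^2/2 + t^4/24 - t^6/720 + t^8/40320)
    by (unfold cos_ub, cos_approx, cos_term; expand_taylor_sum).
  destruct (COS t) as [Hl Hu]; try lra.
  assert (0 <= (t^3)^2 * (56 - t^2)) by (apply Rmult_le_pos; [apply pow2_ge_0|nra]).
  split; nra.
Qed.

Lemma sin_sub_mul_cos_le t : 0 <= t <= 1 -> sin t - t * cos t <= t^2 * sin t.
Proof.
  intros Ht. pose proof PI2_3_2.
  destruct (sin_bounds t) as [Sl Su]; [lra|].
  destruct (cos_bounds t) as [Cl _]; [lra|].
  assert (t^2 * (t - t^3/6) <= t^2 * sin t) by (apply Rmult_le_compat_l; [nra|lra]).
  assert (t * (1 - t^2/2 + t^4/24 - t^6/720) <= t * cos t) by (apply Rmult_le_compat_l; lra).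
  assert (0 <= t^3 * (2/3 - 2*t^2/15 - t^4/720)).
  { apply Rmult_le_pos; [apply pow_le; lra|].
    assert (t^2 <= 1) by nra. assert (t^4 <= 1) by nra. lra. }
  nra.
Qed.

Lemma cusa_inequality t : 0 <= t <= PI/2 -> 3 * sin t <= t * (2 + cos t).
Proof.
  intros Ht. pose proof PI_4.
  destruct (sin_bounds t) as [_ Su]; [lra|].
  destruct (cos_bounds t) as [Cl _]; [lra|].
  assert (t * (1 - t^2/2 + t^4/24 - t^6/720) <= t * cos t) by (apply Rmult_le_compat_l; lra).
  assert (0 <= t^5 * (12 - t^2)) by (apply Rmult_le_pos; [apply pow_le; lra|nra]).
  nra.
Qed.

Definition h_num (b t : R) : R := (b + 1) * sin t - t * (b + cos t).

Definition slope_factor (b u : R) : R := cos u - b / 2 * (sin u / u).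

Lemma is_derive_h_num b t : is_derive (h_num b) t (b * cos t - b + t * sin t).
Proof. unfold h_num. auto_derive; [easy|ring]. Qed.

Lemma h_num_derive_half_angle b u : 0 < u ->
  b * cos (2 * u) - b + 2 * u * sin (2 * u) = 4 * u * sin u * slope_factor b u.
Proof.
  intros Hu. unfold slope_factor. rewrite sin_2a, cos_2a_sin. field. lra.
Qed.

Lemma is_derive_slope_factor b u : 0 < u ->
  is_derive (slope_factor b) u ((b / 2 * (sin u - u * cos u) - u^2 * sin u) / u^2).
Proof. intros Hu. unfold slope_factor. auto_derive; [lra|field; lra]. Qed.

Lemma slope_factor_nonincreasing b u v : 0 <= b <= 2 -> 0 < u <= v -> v <= 1 ->
  slope_factor b v <= slope_factor b u.
Proof.
  intros Hb Huv Hv. pose proof PI2_3_2.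
  apply (Rge_of_derive_nonpos (slope_factor b)
           (fun s => (b / 2 * (sin s - s * cos s) - s^2 * sin s) / s^2) u v); [lra| |].
  - intros s Hs. apply is_derive_slope_factor. lra.
  - intros s Hs.
    assert (Hsin : 0 < sin s) by (apply sin_gt_0; lra).
    pose proof (sin_sub_mul_cos_le s ltac:(lra)).
    assert (b / 2 * (sin s - s * cos s) - s^2 * sin s <= 0).
    { destruct (Rle_lt_dec 0 (sin s - s * cos s)); nra. }
    assert (0 < / s^2) by (apply Rinv_0_lt_compat, pow_lt; lra).
    unfold Rdiv. nra.
Qed.

Lemma h_num_nonneg b t : 0 <= b <= 2 -> 0 <= h_num b (PI/2) -> 0 <= t <= PI/2 ->
  0 <= h_num b t.
Proof.
  intros Hb Hend Ht. pose proof PI_4.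
  assert (Hstart : h_num b 0 = 0) by (unfold h_num; rewrite sin_0, cos_0; ring).
  apply Rle_trans with (Rmin (h_num b 0) (h_num b (PI/2))).
  { rewrite Hstart. apply Rmin_glb; lra. }
  apply (Rmin_ends_le_of_derive_sign_change (h_num b)
           (fun t => b * cos t - b + t * sin t)); [intros; apply is_derive_h_num| |exact Ht].
  intros s s' Hs Hs' Hneg.
  assert (Hs0 : 0 < s).
  { destruct (Req_dec s 0) as [->|]; [|lra].
    rewrite cos_0, sin_0 in Hneg. lra. }
  replace s with (2 * (s / 2)) in Hneg by field.
  replace s' with (2 * (s' / 2)) by field.
  rewrite h_num_derive_half_angle in Hneg |- * by lra.
  assert (0 < sin (s / 2)) by (apply sin_gt_0; lra).
  assert (0 < sin (s' / 2)) by (apply sin_gt_0; lra).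
  assert (Hf : slope_factor b (s / 2) < 0).
  { apply Rnot_le_lt. intros Hf.
    assert (0 <= 4 * (s / 2) * sin (s / 2)) by nra. nra. }
  pose proof (slope_factor_nonincreasing b (s / 2) (s' / 2) Hb ltac:(lra) ltac:(lra)).
  assert (0 <= 4 * (s' / 2) * sin (s' / 2)) by nra. nra.
Qed.

Lemma h_num_PI2 b : h_num b (PI/2) = (PI/2 - 1) * (b1 - b).
Proof.
  pose proof PI2_3_2. unfold h_num, b1. rewrite sin_PI2, cos_PI2. field. lra.
Qed.

Lemma b1_bounds : 0 < b1 < 2.
Proof.
  pose proof PI2_3_2. unfold b1.
  split; [apply Rdiv_lt_0_compat; lra|].
  apply Rmult_lt_reg_r with (PI - 2); [lra|]. field_simplify; lra.
Qed.

Lemma h_num_pos_near_0 b : 0 <= b < 2 -> exists t, 0 < t <= 1 /\ 0 < h_num b t.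
Proof.
  intros Hb. pose proof PI2_3_2.
  exists ((2 - b) / 2). set (t := (2 - b) / 2).
  assert (Ht : 0 < t <= 1) by (unfold t; lra).
  assert (Hbt : 2 - b = 2 * t) by (unfold t; field).
  split; [exact Ht|].
  destruct (sin_bounds t) as [Sl _]; [lra|].
  destruct (cos_bounds t) as [_ Cu]; [lra|].
  assert ((b + 1) * (t - t^3/6) <= (b + 1) * sin t) by (apply Rmult_le_compat_l; lra).
  assert (t * cos t <= t * (1 - t^2/2 + t^4/24)) by (apply Rmult_le_compat_l; lra).
  (* the two Taylor bounds give h_num b t >= t^3 (4 (2 - b) - t^2) / 24 *)
  assert (0 < t^3 * (4 * (2 - b) - t^2)).
  { apply Rmult_lt_0_compat; [apply pow_lt; lra|].
    assert (t^2 <= t) by (simpl; nra). lra. }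
  unfold h_num. nra.
Qed.

Lemma h_b_sin_mul b t : 0 < b -> 0 <= t <= PI/2 ->
  h_b b (sin t) * (b + cos t) = h_num b t.
Proof.
  intros Hb Ht. pose proof PI2_3_2.
  assert (Hcos : 0 <= cos t) by (apply cos_ge_0; lra).
  unfold h_b, f_b, h_num. rewrite asin_sin by lra.
  replace (sin t ^ 2) with (sin t)² by (unfold Rsqr; ring).
  rewrite <- Rtrigo_facts.cos_sin by lra. field. lra.
Qed.

Lemma h_b_sin_nonneg_iff b t : 0 < b -> 0 <= t <= PI/2 ->
  0 <= h_b b (sin t) <-> 0 <= h_num b t.
Proof.
  intros Hb Ht. pose proof PI2_3_2.
  assert (0 <= cos t) by (apply cos_ge_0; lra).
  rewrite <- (h_b_sin_mul b t) by lra. split; intros; nra.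
Qed.

Lemma h_b_sin_nonpos_iff b t : 0 < b -> 0 <= t <= PI/2 ->
  h_b b (sin t) <= 0 <-> h_num b t <= 0.
Proof.
  intros Hb Ht. pose proof PI2_3_2.
  assert (0 <= cos t) by (apply cos_ge_0; lra).
  rewrite <- (h_b_sin_mul b t) by lra. split; intros; nra.
Qed.

Lemma asin_bound_nonneg x : 0 <= x <= 1 -> 0 <= asin x <= PI/2.
Proof.
  intros Hx. pose proof PI2_3_2. pose proof (asin_bound x).
  split; [|lra].
  apply sin_incr_0; try lra. rewrite sin_0, sin_asin; lra.
Qed.

Lemma asin_le_f_b1 x : 0 <= x <= 1 -> asin x <= f_b b1 x.
Proof.
  intros Hx. pose proof b1_bounds.
  enough (0 <= h_b b1 x) by (unfold h_b in *; lra).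
  rewrite <- (sin_asin x) by lra.
  apply h_b_sin_nonneg_iff; [lra|apply asin_bound_nonneg; exact Hx|].
  apply h_num_nonneg; [lra|rewrite h_num_PI2; lra|apply asin_bound_nonneg; exact Hx].
Qed.

Lemma le_b1_of_asin_le_f_b b : 0 < b ->
  (forall x, 0 <= x <= 1 -> asin x <= f_b b x) -> b <= b1.
Proof.
  intros Hb Hall. pose proof PI2_3_2.
  assert (H1 : 0 <= h_b b (sin (PI/2))).
  { rewrite sin_PI2. specialize (Hall 1 ltac:(lra)). unfold h_b. lra. }
  apply h_b_sin_nonneg_iff in H1; [|lra|lra].
  rewrite h_num_PI2 in H1. nra.
Qed.

Lemma f_b2_le_asin x : 0 <= x <= 1 -> f_b 2 x <= asin x.
Proof.
  intros Hx. pose proof (asin_bound_nonneg x Hx) as Hasin.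
  enough (h_b 2 x <= 0) by (unfold h_b in *; lra).
  rewrite <- (sin_asin x) by lra.
  apply h_b_sin_nonpos_iff; [lra|exact Hasin|].
  pose proof (cusa_inequality (asin x) Hasin). unfold h_num. lra.
Qed.

Lemma two_le_of_f_b_le_asin b : 0 < b ->
  (forall x, 0 <= x <= 1 -> f_b b x <= asin x) -> 2 <= b.
Proof.
  intros Hb Hall. pose proof PI2_3_2.
  apply Rnot_lt_le. intros Hb2.
  destruct (h_num_pos_near_0 b ltac:(lra)) as [t [Ht Hpos]].
  assert (Hsin : 0 <= sin t <= 1) by (split; [apply sin_ge_0|apply SIN_bound]; lra).
  assert (Hle : h_b b (sin t) <= 0) by (specialize (Hall _ Hsin); unfold h_b; lra).
  apply h_b_sin_nonpos_iff in Hle; lra.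
Qed.

Lemma h_b_has_root b : b1 < b < 2 -> exists x, 0 < x < 1 /\ h_b b x = 0.
Proof.
  intros Hb. pose proof PI2_3_2. pose proof b1_bounds.
  destruct (h_num_pos_near_0 b ltac:(lra)) as [t [Ht Hpos]].
  assert (Hend : h_num b (PI/2) < 0) by (rewrite h_num_PI2; nra).
  assert (Hcont : continuity (h_num b)) by (unfold h_num; reg).
  destruct (IVT_cor (h_num b) t (PI/2) Hcont ltac:(lra) ltac:(nra)) as [z [Hz Hroot]].
  assert (Hz' : t <= z < PI/2) by (destruct (Req_dec z (PI/2)) as [->|]; lra).
  exists (sin z). split.
  - rewrite <- sin_0, <- sin_PI2. split; apply sin_increasing_1; lra.
  - apply Rle_antisym.
    + apply h_b_sin_nonpos_iff; lra.
    + apply h_b_sin_nonneg_iff; lra.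
Qed.

Theorem mainTheorem2 :
  (* (i) b1 is the largest b > 0 with asin x <= f_b x on [0,1] *)
  (0 < b1 /\ (forall x, 0 <= x <= 1 -> asin x <= f_b b1 x) /\
   (forall b, 0 < b -> (forall x, 0 <= x <= 1 -> asin x <= f_b b x) -> b <= b1)) /\
  (* (ii) 2 is the smallest b > 0 with f_b x <= asin x on [0,1] *)
  ((forall x, 0 <= x <= 1 -> f_b 2 x <= asin x) /\
   (forall b, 0 < b -> (forall x, 0 <= x <= 1 -> f_b b x <= asin x) -> 2 <= b)) /\
  (* (iii) for b in (b1, 2), h_b has a root in (0,1) *)
  (forall b, b1 < b < 2 -> exists x, 0 < x < 1 /\ h_b b x = 0).
Proof.
  split; [|split].
  - split; [apply b1_bounds|split].
    + exact asin_le_f_b1.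
    + exact le_b1_of_asin_le_f_b.
  - split.
    + exact f_b2_le_asin.
    + exact two_le_of_f_b_le_asin.
  - exact h_b_has_root.
Qed.
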